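(* Let $G$ be a finite non-abelian group satisfying condition (Con), and let $L$ be the Laplacian matrix of $\mathcal C_G$. Let $\mathcal F_0,\ldots,\mathcal F_{r-1}$ be the vertex sets of the connected components of the induced subgraph of $\mathcal C_G$ on $G\setminus Z(G)$ (so $r\ge 2$), and for each $i$ let $\lambda_i=|C(u)|$ for any $u\in\mathcal F_i$ (this is independent of the choice of $u$, and $\lambda_i=|\mathcal F_i|+|Z(G)|$). Then the spectrum of $L$, as a multiset, is the union of: $0$ with multiplicity $1$; $|Z(G)|$ with multiplicity $r-1$; for each $i\in\{0,\ldots,r-1\}$, $\lambda_i$ with multiplicity $|\mathcal F_i|-1$ (multiplicities adding when several $\lambda_i$ coincide); and $|G|$ with multiplicity $|Z(G)|$. In particular $L$ has exactly $|G|-1$ nonzero eigenvalues counted with multiplicity, and the largest eigenvalue of $L$ is $|G|$, with multiplicity $|Z(G)|$.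
   Context: For a finite group $G$, the commuting graph $\mathcal C_G$ is the simple undirected graph with vertex set $G$ in which distinct $u,v\in G$ are adjacent iff $uv=vu$. The Laplacian matrix of a simple graph is $L=D-A$ ($A$ adjacency matrix, $D$ diagonal degree matrix). $Z(G)$ is the center of $G$ and $C(v)=\{w\in G: wv=vw\}$ the centralizer of $v$. Condition (Con): for all $u,v\in G\setminus Z(G)$, either $C(u)=C(v)$ or $C(u)\cap C(v)=Z(G)$. *)

From HB Require Import structures.
From mathcomp Require Import all_boot all_order all_algebra all_fingroup all_solvable.
From mathcomp Require Import algC.
Set Implicit Arguments. Unset Strict Implicit. Unset Printing Implicit Defensive.
Import Order.TTheory GRing.Theory Num.Theory.
Local Open Scope ring_scope.

Section CommGraph.
Local Open Scope group_scope.
Variables (gT : finGroupType) (G : {group gT}).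

(* Vertices of the commuting graph C_G are the elements of G, indexed by
   'I_#|G| through enum_val. *)
Definition cg_vert (i : 'I_#|G|) : gT := @enum_val gT (mem G) i.

Definition cg_adj (i j : 'I_#|G|) : bool :=
  (i != j) && (cg_vert i * cg_vert j == cg_vert j * cg_vert i)%g.

Definition cg_laplacian : 'M[int]_#|G| :=
  \matrix_(i, j) (if i == j then (#|[set k | cg_adj i k]|)%:Z
                  else - ((cg_adj i j : nat)%:Z))%R.

Definition Con : Prop :=
  forall u v, u \in G :\: 'Z(G) -> v \in G :\: 'Z(G) ->
    'C_G[u] = 'C_G[v] \/ 'C_G[u] :&: 'C_G[v] = 'Z(G).

Definition nc_adj : rel gT := fun x y =>
  [&& x \in G :\: 'Z(G), y \in G :\: 'Z(G), x != y & (x * y == y * x)%g].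

Definition nc_components : {set {set gT}} :=
  [set [set y in G :\: 'Z(G) | connect nc_adj x y] | x in G :\: 'Z(G)].

Definition comp_lambda (F : {set gT}) : nat :=
  #|'C_G[odflt 1%g [pick x in F]]|.

End CommGraph.

(* Under (Con) two commuting noncentral elements have the same centralizer,
   so the connected components of the commuting graph on G \ Z(G) are the
   blocks C_G[x] \ Z(G), each block being a clique joined to the universal
   vertices Z(G).  Choosing a representative in every block (and 1 for the
   central elements), we write down an explicit integer matrix P whose rows
   are left eigenvectors of L up to a triangular correction: P L = T P with
   T triangular for a suitable grading of the vertices.  Moreover P = W P1
   with P1 unitriangular and W the identity except in one row, whence
   det P = |G| - |Z(G)| <> 0.  Hence char_poly L = prod_x (X - T_xx), and
   regrouping the diagonal of T along Z(G) and the blocks gives the factored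
   form; the spectral statements follow since 0 < |Z(G)| < |G| and
   0 < lambda_F < |G|. *)
From HB Require Import structures.
From mathcomp Require Import all_boot all_order all_algebra all_fingroup all_solvable.
From mathcomp Require Import algC.
From mathcomp.algebra_tactics Require Import ring.
Set Implicit Arguments. Unset Strict Implicit. Unset Printing Implicit Defensive.
Import Order.TTheory GRing.Theory Num.Theory.

Local Open Scope ring_scope.

(* A matrix whose nonzero off-diagonal entries A i j all strictly decrease a
   grading h (h j < h i) is triangular up to a reordering of the indices, so
   its determinant is the product of its diagonal: every non-identity
   permutation meets a zero entry, since it cannot decrease the total grade. *)
Lemma det_graded (R : comNzRingType) m (A : 'M[R]_m) (h : 'I_m -> nat) :
  (forall i j, i != j -> A i j != 0 -> (h j < h i)%N) ->
  \det A = \prod_i A i i.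
Proof.
move=> hA; rewrite /determinant (bigD1 1%g) //= odd_perm1 expr0 mul1r.
rewrite [X in _ + X]big1 ?addr0; last first.
  move=> s s1.
  have /existsP[i /andP[si hi]]: [exists i, (s i != i) && ~~ (h (s i) < h i)%N].
    apply: contraT => /existsPn s_drops; move/negP: s1; case.
    have le_grade i : (h (s i) <= h i)%N.
      have := s_drops i; rewrite negb_and !negbK.
      by case/orP=> [/eqP->//|]; exact: ltnW.
    have sum_grade : (\sum_i h (s i) = \sum_i h i)%N.
      by rewrite [RHS](reindex_inj (@perm_inj _ s)).
    apply/eqP/permP => i; rewrite perm1; apply/eqP; apply: contraT => si.
    have := s_drops i; rewrite si /= negbK => lt_grade.
    have : (\sum_i h (s i) < \sum_i h i)%N.
      rewrite (bigD1 i) //= [X in (_ < X)%N](bigD1 i) //=.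
      by rewrite -addSn leq_add //; apply: leq_sum => k _; exact: le_grade.
    by rewrite sum_grade ltnn.
  rewrite (bigD1 i) //= (_ : A i (s i) = 0) ?mul0r ?mulr0 //.
  by apply: contraNeq hi => /hA; apply; rewrite eq_sym.
by apply: eq_bigr => i _; rewrite perm1.
Qed.

Lemma char_poly_similar (R : idomainType) m (L T P : 'M[R]_m) :
  \det P != 0 -> P *m L = T *m P -> char_poly L = char_poly T.
Proof.
move=> dP hPL.
have E : map_mx polyC P *m char_poly_mx L = char_poly_mx T *m map_mx polyC P.
  by rewrite /char_poly_mx mulmxBr mulmxBl -!map_mxM hPL -scalar_mxC.
have := congr1 determinant E; rewrite !det_mulmx det_map_mx /= mulrC.
by apply: mulIf; rewrite polyC_eq0.
Qed.

Lemma char_poly_graded (R : idomainType) m (T : 'M[R]_m) (h : 'I_m -> nat) :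
  (forall i j, i != j -> T i j != 0 -> (h j < h i)%N) ->
  char_poly T = \prod_i ('X - (T i i)%:P).
Proof.
move=> hT; rewrite /char_poly (det_graded (h := h)).
  by apply: eq_bigr => i _; rewrite !mxE eqxx.
move=> i j ij; rewrite !mxE (negbTE ij) sub0r oppr_eq0 polyC_eq0; exact: hT.
Qed.

Lemma root_XsubC_exp (R : idomainType) k (c x : R) :
  root (('X - c%:P) ^+ k) x -> x = c.
Proof.
case: k => [|k]; first by rewrite expr0 rootC oner_eq0.
by rewrite root_exp_XsubC => /eqP.
Qed.

Lemma root_prod_XsubC_exp (R : idomainType) (I : finType) (S : {pred I})
    (c : I -> R) (e : I -> nat) x :
  root (\prod_(F in S) ('X - (c F)%:P) ^+ e F) x -> exists2 F, F \in S & x = c F.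
Proof.
rewrite rootE horner_prod => /prodf_eq0 [F FS]; rewrite -rootE.
by move=> /root_XsubC_exp ->; exists F.
Qed.

Lemma factored_spectrum (I : finType) (S : {pred I}) (l e : I -> nat)
    (z n a b : nat) :
  (0 < z)%N -> (z < n)%N -> (forall F, F \in S -> (0 < l F)%N && (l F < n)%N) ->
  let q : {poly algC} := 'X * ('X - (z%:R)%:P) ^+ a
      * \prod_(F in S) ('X - ((l F)%:R)%:P) ^+ e F * ('X - (n%:R)%:P) ^+ b in
  [/\ mup 0 q = 1%N, (forall x, root q x -> x \is Num.real /\ x <= n%:R)
    & mup n%:R q = b].
Proof.
move=> z0 zn hl q; have n0 := ltn_trans z0 zn.
pose P := \prod_(F in S) ('X - ((l F)%:R)%:P) ^+ e F : {poly algC}.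
have P0 : ~~ root P 0.
  apply/negP => /root_prod_XsubC_exp [F FS] /esym/eqP; rewrite pnatr_eq0.
  by case/andP: (hl F FS); rewrite lt0n => /negbTE ->.
have Pn : ~~ root P n%:R.
  apply/negP => /root_prod_XsubC_exp [F FS] /eqP; rewrite eqr_nat.
  by case/andP: (hl F FS) => _; rewrite ltn_neqAle eq_sym => /andP[/negbTE ->].
have notroot_exp (c x : nat) k : c != x -> ~~ root (('X - (c%:R)%:P) ^+ k : {poly algC}) x%:R.
  by move=> cx; apply/negP => /root_XsubC_exp /eqP; rewrite eqr_nat eq_sym (negbTE cx).
split.
- rewrite /q mupMl; last by apply: (notroot_exp n 0%N); rewrite -lt0n.
  rewrite mupMl // mupMl; last by apply: (notroot_exp z 0%N); rewrite -lt0n.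
  by rewrite -{1}(subr0 'X) -[_ - _]expr1 mup_XsubCX eqxx.
- move=> x; rewrite /q !rootM -!orbA.
  case/or4P=> [|/root_XsubC_exp ->|/root_prod_XsubC_exp [F FS ->]|/root_XsubC_exp ->].
  + by rewrite rootX => /eqP ->; split; [exact: real0 | exact: ler0n].
  + by split; [exact: realn | rewrite ler_nat ltnW].
  + by split; [exact: realn | rewrite ler_nat; case/andP: (hl F FS) => _ /ltnW].
  + by split; [exact: realn | exact: lexx].
- rewrite /q mupMr ?mup_XsubCX ?eqxx //.
  rewrite !rootM negb_or Pn andbT negb_or rootX pnatr_eq0 gtn_eqF //=.
  by apply: notroot_exp; rewrite neq_ltn zn.
Qed.

Local Close Scope ring_scope.

Section CommutingGraphUnderCon.
Variables (gT : finGroupType) (G : {group gT}).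
Hypothesis nabG : ~~ abelian G.
Hypothesis conG : Con G.

Local Open Scope group_scope.

Lemma center_sub_cent1 x : x \in G -> 'Z(G) \subset 'C_G[x].
Proof.
move=> xG; apply/subsetP => y /centerP [yG cy]; rewrite inE yG /=.
by apply/cent1P; exact: cy.
Qed.

Lemma commute_cent1 x y : x \in G -> y \in G -> (x * y == y * x) = (y \in 'C_G[x]).
Proof. by move=> xG yG; rewrite inE yG /=; apply/eqP/cent1P => h; exact: esym. Qed.

Lemma cent1_sym x y : x \in G -> y \in G -> (y \in 'C_G[x]) = (x \in 'C_G[y]).
Proof. by move=> xG yG; rewrite -commute_cent1 // -commute_cent1 // eq_sym. Qed.

Lemma cent1_id x : x \in G -> x \in 'C_G[x].
Proof. by move=> xG; rewrite inE xG cent1id. Qed.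

Lemma cent1_center x : x \in 'Z(G) -> 'C_G[x] = G.
Proof.
move=> xZ; apply/setIidPl/subsetP => y yG; have xG := subsetP (center_sub G) _ xZ.
by have := subsetP (center_sub_cent1 yG) _ xZ; rewrite cent1_sym //; case/setIP.
Qed.

Lemma cent1_proper x : x \in G :\: 'Z(G) -> #|'C_G[x]| < #|G|.
Proof.
move=> /setDP[xG xZ]; apply: proper_card; rewrite properEneq subsetIl andbT.
apply: contra xZ => /eqP CxG; apply/centerP; split => // y yG.
by have /setIP[_ /cent1P] : y \in 'C_G[x] by rewrite CxG.
Qed.

Lemma center_lt : #|'Z(G)| < #|G|.
Proof.
apply: proper_card; rewrite properEneq center_sub andbT.
by apply: contra nabG => /eqP ZG; rewrite /abelian -{1}ZG subsetIr.
Qed.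

(* Under (Con) the
   blocks of noncentral elements are the connected components of the
   commuting graph on G \ Z(G), and each of them is a clique. *)
Definition block x := 'C_G[x] :\: 'Z(G).

Definition rep x := if x \in 'Z(G) then 1 else odflt 1 [pick y in block x].

Lemma in_block x y : (y \in block x) = (y \in 'C_G[x]) && (y \notin 'Z(G)).
Proof. by rewrite /block inE andbC. Qed.

Lemma block_subG x y : y \in block x -> y \in G.
Proof. by case/setDP=> /setIP[]. Qed.

Lemma block_noncentral x y : y \in block x -> y \in G :\: 'Z(G).
Proof. by move=> yK; rewrite inE (block_subG yK) andbT; move: yK; rewrite in_block => /andP[]. Qed.

Lemma block_self x : x \in G :\: 'Z(G) -> x \in block x.
Proof. by move=> /setDP[xG xZ]; rewrite in_block cent1_id. Qed.

Lemma cent1_block x y : x \in G :\: 'Z(G) -> y \in block x -> 'C_G[y] = 'C_G[x].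
Proof.
move=> xnZ yK; have yG := block_subG yK.
case: (conG (block_noncentral yK) xnZ) => // CyxZ.
by move: yK; rewrite in_block => /andP[yC]; rewrite -CyxZ inE yC cent1_id.
Qed.

Lemma block_block x y : x \in G :\: 'Z(G) -> y \in block x -> block y = block x.
Proof. by move=> xnZ yK; rewrite /block (cent1_block xnZ yK). Qed.

Lemma rep_center x : x \in 'Z(G) -> rep x = 1.
Proof. by rewrite /rep => ->. Qed.

Lemma rep1 : rep 1 = 1.
Proof. by rewrite rep_center // group1. Qed.

Lemma rep_in_block x : x \in G :\: 'Z(G) -> rep x \in block x.
Proof.
move=> xnZ; rewrite /rep (negbTE (setDP xnZ).2).
by case: pickP => [y //|/(_ x)]; rewrite block_self.
Qed.

Lemma rep_noncentral x : x \in G :\: 'Z(G) -> rep x \in G :\: 'Z(G).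
Proof. by move=> h; apply: block_noncentral (rep_in_block h). Qed.

Lemma rep_subG x : x \in G -> rep x \in G.
Proof.
move=> xG; have [xZ|xZ] := boolP (x \in 'Z(G)); first by rewrite rep_center.
have xnZ : x \in G :\: 'Z(G) by rewrite inE xZ xG.
by case/setDP: (rep_noncentral xnZ).
Qed.

Lemma block_rep x : x \in G :\: 'Z(G) -> block (rep x) = block x.
Proof. by move=> h; apply: block_block (rep_in_block h). Qed.

Lemma cent1_rep x : x \in G -> 'C_G[rep x] = 'C_G[x].
Proof.
move=> xG; have [xZ|xZ] := boolP (x \in 'Z(G)).
  by rewrite rep_center // !cent1_center ?group1.
by apply: cent1_block (rep_in_block _); rewrite inE xZ.
Qed.

Lemma rep_idem x : x \in G -> rep (rep x) = rep x.
Proof.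
move=> xG; have [xZ|xZ] := boolP (x \in 'Z(G)).
  by rewrite rep_center // rep_center ?group1.
have xnZ : x \in G :\: 'Z(G) by rewrite inE xZ xG.
have /setDP[_ rZ] := rep_noncentral xnZ.
by rewrite {1}/rep (negbTE rZ) block_rep // /rep (negbTE xZ).
Qed.

Lemma eq_rep x y : x \in G :\: 'Z(G) -> y \in G :\: 'Z(G) ->
  (rep x == rep y) = (block x == block y).
Proof.
move=> xnZ ynZ; apply/eqP/eqP => h; first by rewrite -block_rep // h block_rep.
by rewrite /rep (negbTE (setDP xnZ).2) (negbTE (setDP ynZ).2) h.
Qed.

(* The blocks are the connected components of the noncentral commuting
   graph: the component of x is closed under adjacency because adjacent
   noncentral vertices have equal blocks, and it contains the clique block x. *)
Lemma connect_block x y : x \in G :\: 'Z(G) -> y \in G :\: 'Z(G) ->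
  connect (nc_adj G) x y = (y \in block x).
Proof.
move=> xnZ ynZ; apply/idP/idP => [xy|yK]; last first.
  have [<-|neq_xy] := eqVneq x y; first exact: connect0.
  apply: connect1; rewrite /nc_adj xnZ ynZ neq_xy /= commute_cent1 ?(setDP xnZ).1 ?(setDP ynZ).1 //.
  by move: yK; rewrite in_block => /andP[].
pose same := [pred w | (w \in G :\: 'Z(G)) && (block w == block x)].
have sameE w : (w \in same) = (w \in G :\: 'Z(G)) && (block w == block x) by [].
have same_closed : closed (nc_adj G) same.
  move=> u v /and4P[unZ vnZ _ cuv]; rewrite !sameE unZ vnZ /=.
  have vK : v \in block u.
    by rewrite in_block -commute_cent1 ?(setDP unZ).1 ?(setDP vnZ).1 // cuv; case/setDP: vnZ.
  by rewrite (block_block unZ vK).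
have := closed_connect same_closed xy; rewrite !sameE xnZ ynZ eqxx /=.
by move=> /esym/eqP <-; exact: block_self.
Qed.

Definition reps := [set x in G :\: 'Z(G) | rep x == x].

Lemma rep_in_reps x : x \in G :\: 'Z(G) -> rep x \in reps.
Proof.
move=> h; apply/setIdP; split; first exact: rep_noncentral.
by rewrite rep_idem ?(setDP h).1.
Qed.

Lemma reps_of k : k \in G -> rep k = k -> k != 1 -> k \in reps.
Proof.
move=> kG rk k1; apply/setIdP; split; last by rewrite rk.
apply/setDP; split => //; apply: contra k1 => kZ.
by rewrite -rk rep_center.
Qed.

Lemma one_notin_reps : (1 \in reps) = false.
Proof. by apply/negP => /setIdP[/setDP[_]]; rewrite group1. Qed.

Lemma components_blocks : nc_components G = [set block x | x in reps].
Proof.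
have comp_eq x : x \in G :\: 'Z(G) ->
    [set y in G :\: 'Z(G) | connect (nc_adj G) x y] = block x.
  move=> xnZ; apply/setP => y; rewrite inE.
  have [ynZ|ynZ] := boolP (y \in G :\: 'Z(G)); first by rewrite connect_block.
  by apply/esym/negP => /block_noncentral; rewrite (negbTE ynZ).
apply/setP => F; apply/imsetP/imsetP => [[x xnZ ->]|[x /setIdP[xnZ _] ->]].
  by exists (rep x); rewrite ?rep_in_reps // block_rep // comp_eq.
by exists x; rewrite ?comp_eq.
Qed.

Lemma block_inj : {in reps &, injective block}.
Proof.
move=> x y /setIdP[xnZ /eqP rx] /setIdP[ynZ /eqP ry] h.
by rewrite -rx -ry; apply/eqP; rewrite eq_rep // h.
Qed.

Lemma card_components : #|nc_components G| = #|reps|.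
Proof. by rewrite components_blocks card_in_imset //; exact: block_inj. Qed.

Lemma rep_fibre k : k \in reps -> [set m in G | rep m == k] = block k.
Proof.
case/setIdP => knZ /eqP rk; apply/setP => m; rewrite inE.
have [mG|mG] /= := boolP (m \in G); last first.
  by apply/esym/negP => /block_subG; rewrite (negbTE mG).
have [mZ|mZ] := boolP (m \in 'Z(G)).
  rewrite rep_center // in_block mZ andbF; apply/negP => /eqP k1.
  by case/setDP: knZ => _; rewrite -k1 group1.
have mnZ : m \in G :\: 'Z(G) by rewrite inE mZ mG.
rewrite -{1}rk eq_rep //; apply/eqP/idP => [<-|mK]; first exact: block_self.
exact: block_block.
Qed.

Lemma rep_fibre1 : [set m in G | rep m == 1] = 'Z(G).
Proof.
apply/setP => m; rewrite inE; have [mZ|mZ] := boolP (m \in 'Z(G)).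
  by rewrite rep_center // eqxx (subsetP (center_sub G)).
have [mG|//] := boolP (m \in G).
have mnZ : m \in G :\: 'Z(G) by rewrite inE mZ mG.
have /setDP[_] := rep_noncentral mnZ.
by apply: contraNF => /eqP ->; rewrite group1.
Qed.

Definition pivot := rep (odflt 1 [pick x in G :\: 'Z(G)]).

Lemma pivot_in_reps : pivot \in reps.
Proof.
apply: rep_in_reps; case: pickP => [x //|none].
have: G :\: 'Z(G) != set0.
  by apply: contra nabG; rewrite setD_eq0 => h; apply: subset_trans h (subsetIr _ _).
by case/set0Pn => x; rewrite none.
Qed.

Lemma pivot_noncentral : pivot \in G :\: 'Z(G).
Proof. by case/setIdP: pivot_in_reps. Qed.

Lemma pivot_subG : pivot \in G.
Proof. by case/setDP: pivot_noncentral. Qed.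

Lemma rep_pivot : rep pivot = pivot.
Proof. by case/setIdP: pivot_in_reps => _ /eqP. Qed.

Lemma pivot_neq1 : pivot != 1.
Proof. by apply: contraTneq pivot_in_reps => ->; rewrite one_notin_reps. Qed.

Lemma one_neq_pivot : 1 != pivot.
Proof. by rewrite eq_sym pivot_neq1. Qed.

Definition csize x := #|'C_G[x]|.

Lemma csize_block x : x \in G -> csize x = #|block x| + #|'Z(G)|.
Proof.
move=> xG; rewrite /block cardsD (setIidPr (center_sub_cent1 xG)) subnK //.
exact: subset_leq_card (center_sub_cent1 xG).
Qed.

Lemma csize_rep x : x \in G -> csize (rep x) = csize x.
Proof. by move=> xG; rewrite /csize cent1_rep. Qed.

Lemma sum_card_blocks : \sum_(m in reps) #|block m| = #|G| - #|'Z(G)|.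
Proof.
have -> : #|G| - #|'Z(G)| = #|G :\: 'Z(G)|.
  by rewrite cardsD (setIidPr (center_sub G)).
rewrite -sum1_card.
rewrite [RHS](partition_big rep (mem reps)); last by move=> i /rep_in_reps.
apply: eq_bigr => m mR; rewrite -(rep_fibre mR) sum1dep_card.
suff -> : [set x in G | rep x == m] = [set x in G :\: 'Z(G) | rep x == m] by [].
apply/setP => x; apply/setIdP/setIdP => [[xG rx]|[/setDP[xG _] rx]] //.
split=> //; apply/setDP; split=> //; apply: contraTN rx => xZ.
by rewrite rep_center //; apply: contraTneq mR => <-; rewrite one_notin_reps.
Qed.

Local Open Scope ring_scope.

(* Matrices indexed by G are handled as integer kernels gT -> gT -> int;
   ind is the 0/1 indicator of a boolean. *)
Definition ind (b : bool) : int := if b then 1 else 0.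
Definition nG : int := #|G|%:R.
Definition nZ : int := #|'Z(G)|%:R.

Lemma sum_ind_eq a (F : gT -> int) : a \in G -> \sum_(m in G) ind (m == a) * F m = F a.
Proof.
move=> aG; rewrite (bigD1 a) //= eqxx mul1r big1 ?addr0 // => m /andP[_ ma].
by rewrite /ind (negbTE ma) mul0r.
Qed.

Lemma sum_ind_diff a b (F : gT -> int) : a \in G -> b \in G ->
  \sum_(m in G) (ind (m == a) - ind (m == b)) * F m = F a - F b.
Proof.
by move=> aG bG; rewrite (eq_bigr _ (fun m _ => mulrBl _ _ _)) sumrB !sum_ind_eq.
Qed.

Lemma sum_ind_in (A : {set gT}) (F : gT -> int) : A \subset G ->
  \sum_(m in G) ind (m \in A) * F m = \sum_(m in A) F m.
Proof.
move=> sAG; rewrite big_mkcond [RHS]big_mkcond; apply: eq_bigr => m _.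
rewrite /ind; case: (boolP (m \in A)) => mA; last by rewrite mul0r; case: ifP.
by rewrite (subsetP sAG m mA) mul1r.
Qed.

Lemma sum_ind_card (A : {set gT}) : A \subset G ->
  \sum_(m in G) ind (m \in A) = #|A|%:R.
Proof.
move=> sAG; rewrite -(eq_bigr _ (fun m _ => mulr1 _)) sum_ind_in //.
by rewrite sumr_const.
Qed.

Lemma sum_in_ind_diff (A : {set gT}) (j k : gT) :
  \sum_(m in A) (ind (j == m) - ind (j == k)) = ind (j \in A) - #|A|%:R * ind (j == k).
Proof.
rewrite sumrB sumr_const -mulr_natl mulr1 mulr_natl; congr (_ - _).
have [jA|jA] := boolP (j \in A).
  rewrite (bigD1 j) //= eqxx big1 ?addr0 // => m /andP[_ mj].
  by rewrite /ind eq_sym (negbTE mj).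
by rewrite big1 // => m mA; rewrite /ind; case: eqP => // jm; rewrite jm mA in jA.
Qed.

Definition lapk (x y : gT) : int := ind (x == y) * (csize x)%:R - ind (y \in 'C_G[x]).

(* Rows of the change of basis P: for a non-representative k the eigenvector
   e_k - e_(rep k); for 1 the vector e_1; for the pivot the all-ones vector;
   for any other representative k the vector e_k - e_pivot.  unik is P with
   the pivot row replaced by e_pivot (a unitriangular matrix). *)
Definition unik (k j : gT) : int :=
  if rep k != k then ind (j == k) - ind (j == rep k)
  else if k == 1%g then ind (j == 1%g)
  else if k == pivot then ind (j == pivot)
  else ind (j == k) - ind (j == pivot).
Definition eigk (k j : gT) : int := if k == pivot then 1 else unik k j.

(* The triangular matrix T with P L = T P: its diagonal is |C_G[k]| for
   non-representatives, |G| at 1, 0 at the pivot and |Z(G)| at the other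
   representatives. *)
Definition trik (k j : gT) : int :=
  if rep k != k then (csize k)%:R * ind (j == k)
  else if k == 1%g then nG * ind (j == 1%g) - ind (j == pivot)
  else if k == pivot then 0
  else nZ * ind (j == k) - ind (j \in block k :\ k) + ind (j \in block pivot :\ pivot).

Lemma ind_cent1 k j : k \in G :\: 'Z(G) -> j \in G ->
  ind (j \in 'C_G[k]) = ind (j \in 'Z(G)) + ind (j \in block k :\ k) + ind (j == k).
Proof.
move=> knZ jG; have [->|jk] := eqVneq j k.
  by rewrite cent1_id ?(setDP knZ).1 // (negbTE (setDP knZ).2) in_setD1 eqxx /ind /=; ring.
rewrite in_setD1 jk /= in_block.
have [jZ|jZ] /= := boolP (j \in 'Z(G)); last by rewrite /ind; case: ifP => _; ring.
by rewrite (subsetP (center_sub_cent1 (setDP knZ).1) _ jZ) /ind; ring.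
Qed.

Lemma csize_noncentral k : k \in G :\: 'Z(G) ->
  ((csize k)%:R : int) = nZ + #|block k :\ k|%:R + 1.
Proof.
move=> knZ; rewrite csize_block ?(setDP knZ).1 // (cardsD1 k (block k)) block_self //.
by rewrite /nZ (_ : nat_of_bool true = 1%N) // !natrD; ring.
Qed.

Lemma block_elem k m : k \in reps -> m \in block k :\ k -> rep m = k /\ rep m != m.
Proof.
move=> kR /setD1P[mk mK].
have : m \in [set m in G | rep m == k] by rewrite rep_fibre.
by case/setIdP => mG /eqP rm; rewrite rm eq_sym.
Qed.

Lemma eigk_block k m j : k \in reps -> m \in block k :\ k ->
  eigk m j = ind (j == m) - ind (j == k).
Proof.
move=> kR mK; have [rm nrm] := block_elem kR mK.
have mp : m != pivot by apply: contraNneq nrm => ->; rewrite rep_pivot.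
by rewrite /eigk (negbTE mp) /unik nrm rm.
Qed.

(* Non-representative rows: e_k - e_(rep k) is an eigenvector, since k and
   rep k have the same centralizer. *)
Lemma intertwine_nonrep k j : k \in G -> j \in G -> rep k != k ->
  \sum_(m in G) eigk k m * lapk m j = \sum_(m in G) trik k m * eigk m j.
Proof.
move=> kG jG rk; have kp : k != pivot by apply: contraNneq rk => ->; rewrite rep_pivot.
rewrite (eq_bigr (fun m => (ind (m == k) - ind (m == rep k)) * lapk m j)); last first.
  by move=> m _; rewrite /eigk (negbTE kp) /unik rk.
rewrite sum_ind_diff ?rep_subG //.
rewrite (eq_bigr (fun m => ind (m == k) * ((csize k)%:R * eigk m j))); last first.
  by move=> m _; rewrite /trik rk mulrA [_ * ind _]mulrC.
rewrite sum_ind_eq // /eigk (negbTE kp) /unik rk /lapk cent1_rep // csize_rep //.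
by rewrite (eq_sym k j) (eq_sym (rep k) j); ring.
Qed.

(* Row of 1: e_1 L = |G| e_1 - (all-ones), the all-ones vector being the
   pivot row of P. *)
Lemma intertwine_one j : j \in G ->
  \sum_(m in G) eigk 1 m * lapk m j = \sum_(m in G) trik 1 m * eigk m j.
Proof.
move=> jG; have pG := pivot_subG.
rewrite (eq_bigr (fun m => ind (m == 1%g) * lapk m j)); last first.
  by move=> m _; rewrite /eigk (negbTE one_neq_pivot) /unik rep1 eqxx.
rewrite sum_ind_eq ?group1 //.
rewrite (eq_bigr (fun m => ind (m == 1%g) * (nG * eigk m j) - ind (m == pivot) * eigk m j));
  last by move=> m _; rewrite /trik rep1 eqxx /=; ring.
rewrite sumrB !sum_ind_eq ?group1 // /lapk /eigk eqxx (negbTE one_neq_pivot) /unik rep1 eqxx /=.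
by rewrite /csize cent1_center ?group1 // jG /nG /ind eq_sym; case: ifP => _; ring.
Qed.

(* Pivot row: the all-ones vector lies in the kernel of L. *)
Lemma intertwine_pivot j : j \in G ->
  \sum_(m in G) eigk pivot m * lapk m j = \sum_(m in G) trik pivot m * eigk m j.
Proof.
move=> jG; rewrite [RHS]big1; last first.
  by move=> m _; rewrite /trik rep_pivot eqxx /= (negbTE pivot_neq1) mul0r.
rewrite (eq_bigr (fun m => ind (m == j) * (csize m)%:R - ind (m \in 'C_G[j]))); last first.
  by move=> m mG; rewrite /eigk eqxx mul1r /lapk cent1_sym // eq_sym.
rewrite sumrB sum_ind_eq // sum_ind_card ?subsetIl //.
by rewrite subrr.
Qed.

(* Other representative rows: (e_k - e_pivot) L = |Z(G)| (e_k - e_pivot)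
   minus the rows of P attached to block k \ k, plus those of block pivot. *)
Lemma intertwine_rep k j : k \in reps -> k != pivot -> j \in G ->
  \sum_(m in G) eigk k m * lapk m j = \sum_(m in G) trik k m * eigk m j.
Proof.
move=> kR kp jG; have /setIdP[knZ /eqP rk] := kR; have kG := (setDP knZ).1.
have k1 : k != 1%g by apply: contraTneq kR => ->; rewrite one_notin_reps.
have pG := pivot_subG; have pnZ := pivot_noncentral.
rewrite (eq_bigr (fun m => (ind (m == k) - ind (m == pivot)) * lapk m j)); last first.
  by move=> m _; rewrite /eigk (negbTE kp) /unik rk eqxx /= (negbTE k1) (negbTE kp).
rewrite sum_ind_diff //.
rewrite (eq_bigr (fun m => ind (m == k) * (nZ * eigk m j)
    - ind (m \in block k :\ k) * eigk m j + ind (m \in block pivot :\ pivot) * eigk m j));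
  last by move=> m _; rewrite /trik rk eqxx /= (negbTE k1) (negbTE kp); ring.
have sub x : block x :\ x \subset G by apply/subsetP => y /setD1P[_ /block_subG].
rewrite big_split /= sumrB sum_ind_eq // !sum_ind_in //.
rewrite (eq_bigr (fun m => ind (j == m) - ind (j == k))); last by move=> m /(eigk_block j kR).
rewrite [X in _ = _ + X](eq_bigr (fun m => ind (j == m) - ind (j == pivot))); last first.
  by move=> m /(eigk_block j pivot_in_reps).
rewrite !sum_in_ind_diff /eigk (negbTE kp) /unik rk eqxx /= (negbTE k1) (negbTE kp).
rewrite /lapk (ind_cent1 knZ jG) (ind_cent1 pnZ jG).
rewrite (csize_noncentral knZ) (csize_noncentral pnZ) (eq_sym k j) (eq_sym pivot j); ring.
Qed.

Lemma intertwine k j : k \in G -> j \in G ->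
  \sum_(m in G) eigk k m * lapk m j = \sum_(m in G) trik k m * eigk m j.
Proof.
move=> kG jG; have [rk|/negbNE/eqP rk] := boolP (rep k != k).
  exact: intertwine_nonrep.
have [->|k1] := eqVneq k 1%g; first exact: intertwine_one.
have [->|kp] := eqVneq k pivot; first exact: intertwine_pivot.
exact: intertwine_rep (reps_of kG rk k1) kp jG.
Qed.

(* The all-ones row of P is the combination with weights pivot_weight of the
   rows of the unitriangular matrix unik: P = W * unik where W is the identity
   except for its pivot row, which is pivot_weight. *)
Definition pivot_weight (j : gT) : int :=
  if rep j != j then 1 else if j == 1%g then nZ
  else if j == pivot then nG - nZ else #|block j|%:R.
Definition weightk (k j : gT) : int := if k == pivot then pivot_weight j else ind (j == k).

Definition attached j := [set m in G | (rep m != m) && (rep m == j)].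

Lemma attached_nonrep j : j \in G -> rep j != j -> attached j = set0.
Proof.
move=> jG rj; apply/setP => m; rewrite in_set0; apply/negP.
by move=> /setIdP[mG /andP[_ /eqP rm]]; rewrite -rm rep_idem ?eqxx in rj.
Qed.

Lemma attached_rep j : rep j = j -> attached j = [set m in G | rep m == j] :\ j.
Proof.
move=> rj; apply/setP => m; rewrite /attached.
apply/setIdP/setD1P => [[mG /andP[rm /eqP rmj]]|[mj /setIdP[mG /eqP rmj]]].
  by split; [apply: contraNneq rm => ->; rewrite rj | apply/setIdP; split; rewrite ?rmj].
by split => //; rewrite rmj eq_sym mj eqxx.
Qed.

Definition shiftk (m j : gT) : int :=
  if rep m != m then ind (j == rep m)
  else if (m == 1%g) || (m == pivot) then 0 else ind (j == pivot).

Lemma unik_shift m j : unik m j = ind (j == m) - shiftk m j.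
Proof.
rewrite /unik /shiftk; case: (rep m != m) => //.
have [->|m1] /= := eqVneq m 1%g; first by rewrite subr0.
by have [->|mp] /= := eqVneq m pivot; rewrite ?subr0.
Qed.

Lemma weighted_shift m j : m \in G -> pivot_weight m * shiftk m j =
  ind (m \in attached j) + ind (j == pivot) * (ind (m \in reps :\ pivot) * #|block m|%:R).
Proof.
move=> mG; rewrite /pivot_weight /shiftk /attached inE mG /=.
have [rm|/negbNE/eqP rm] /= := boolP (rep m != m).
  have mR : m \notin reps by apply: contra rm => /setIdP[_ ->].
  by rewrite in_setD1 (negbTE mR) andbF /ind /= mul0r mulr0 addr0 mul1r eq_sym.
rewrite /ind /= add0r.
have [->|m1] /= := eqVneq m 1%g.
  by rewrite mulr0 in_setD1 one_notin_reps andbF mul0r mulr0.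
have [->|mp] /= := eqVneq m pivot; first by rewrite mulr0 in_setD1 eqxx /= mul0r mulr0.
by rewrite in_setD1 mp (reps_of mG rm m1) /=; case: (j == pivot); ring.
Qed.

Lemma sum_card_blocks_pivot :
  \sum_(m in reps :\ pivot) (#|block m|%:R : int) = nG - nZ - #|block pivot|%:R.
Proof.
have := congr1 (fun x : nat => (x%:R : int)) sum_card_blocks => /=.
rewrite natr_sum (bigD1 pivot pivot_in_reps) /= natrB; last exact: subset_leq_card (center_sub G).
move=> E; rewrite /nG /nZ -E (addrC (#|block pivot|%:R)) addrK.
by apply: eq_bigl => m; rewrite in_setD1 andbC.
Qed.

Lemma weight_factor k j : k \in G -> j \in G ->
  \sum_(m in G) weightk k m * unik m j = eigk k j.
Proof.
move=> kG jG; have [->|kp] := eqVneq k pivot; last first.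
  rewrite (eq_bigr (fun m => ind (m == k) * unik m j)); last first.
    by move=> m _; rewrite /weightk (negbTE kp).
  by rewrite sum_ind_eq // /eigk (negbTE kp).
rewrite /eigk eqxx.
rewrite (eq_bigr (fun m => ind (m == j) * pivot_weight m - pivot_weight m * shiftk m j));
  last by move=> m _; rewrite /weightk eqxx unik_shift mulrBr eq_sym /ind; case: ifP => _; ring.
rewrite sumrB sum_ind_eq // (eq_bigr _ (fun m mG => weighted_shift j mG)) big_split /=.
rewrite sum_ind_card; last by apply/subsetP => m /setIdP[].
rewrite -mulr_sumr sum_ind_in; last by apply/subsetP => m /setD1P[_ /setIdP[/setDP[]]].
rewrite sum_card_blocks_pivot.
have [rj|/negbNE/eqP rj] := boolP (rep j != j).
  have jp : j != pivot by apply: contraNneq rj => ->; rewrite rep_pivot.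
  by rewrite attached_nonrep // cards0 /pivot_weight rj /ind (negbTE jp); ring.
rewrite attached_rep //.
have [j1|j1] := eqVneq j 1%g.
  rewrite j1 rep_fibre1 /pivot_weight rep1 eqxx /= /ind (negbTE one_neq_pivot) /nZ.
  by rewrite (cardsD1 1%g 'Z(G)) group1 natrD (_ : nat_of_bool true = 1%N) //; ring.
have jR := reps_of jG rj j1; rewrite rep_fibre //.
have cK : (#|block j|%:R : int) = #|block j :\ j|%:R + 1.
  by rewrite (cardsD1 j (block j)) block_self ?(setIdP jR).1 // natrD addrC.
have [jp|jp] := eqVneq j pivot.
  by rewrite jp /pivot_weight rep_pivot eqxx /= (negbTE pivot_neq1) /ind -jp cK; ring.
by rewrite /pivot_weight rj eqxx /= (negbTE j1) (negbTE jp) /ind cK; ring.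
Qed.

Definition kmx (f : gT -> gT -> int) : 'M[int]_#|G| :=
  \matrix_(i, j) f (cg_vert i) (cg_vert j).

Lemma cg_vertG (i : 'I_#|G|) : cg_vert i \in G.
Proof. exact: enum_valP. Qed.

Lemma eq_cg_vert (i j : 'I_#|G|) : (cg_vert i == cg_vert j) = (i == j).
Proof. exact: (inj_eq enum_val_inj). Qed.

Lemma kmx_mul f g i j :
  (kmx f *m kmx g) i j = \sum_(x in G) f (cg_vert i) x * g x (cg_vert j).
Proof.
rewrite mxE (big_enum_val (fun x => f (cg_vert i) x * g x (cg_vert j))).
by apply: eq_bigr => k _; rewrite !mxE.
Qed.

Lemma prod_cg_vert (F : gT -> {poly int}) :
  \prod_(i < #|G|) F (cg_vert i) = \prod_(x in G) F x.
Proof. exact/esym/big_enum_val. Qed.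

Lemma card_cg_adj (i : 'I_#|G|) :
  #|[set k | cg_adj i k]| = #|'C_G[cg_vert i] :\ cg_vert i|.
Proof.
set x := cg_vert i; pose P y := (y != x) && (y \in 'C_G[x]).
rewrite -sum1dep_card big_mkcond /=.
rewrite (eq_bigr (fun k => (fun y => if P y then 1%N else 0%N) (cg_vert k))).
  rewrite -(big_enum_val (fun y => if P y then 1%N else 0%N)) -big_mkcondr /= sum1dep_card.
  apply: eq_card => y; rewrite in_set in_setD1 /P in_setI.
  by case: (y \in G); rewrite ?andbF.
move=> k _ /=; rewrite /cg_adj /P commute_cent1 ?cg_vertG //.
by rewrite eq_sym eq_cg_vert eq_sym.
Qed.

Lemma laplacian_kmx : cg_laplacian G = kmx lapk.
Proof.
apply/matrixP => i j; rewrite !mxE /lapk eq_cg_vert.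
have [<-|ij] := eqVneq i j.
  rewrite card_cg_adj /ind mul1r cent1_id ?cg_vertG // /csize.
  rewrite (cardsD1 (cg_vert i) 'C_G[_]) cent1_id ?cg_vertG //.
  by rewrite add1n -addn1 natrD addrK natz.
rewrite /ind mul0r sub0r /cg_adj ij /= commute_cent1 ?cg_vertG //.
by case: (_ \in _).
Qed.

Lemma similarity : kmx eigk *m cg_laplacian G = kmx trik *m kmx eigk.
Proof.
by apply/matrixP => i j; rewrite laplacian_kmx !kmx_mul intertwine ?cg_vertG.
Qed.

Lemma eigk_factor : kmx eigk = kmx weightk *m kmx unik.
Proof. by apply/matrixP => i j; rewrite kmx_mul mxE weight_factor ?cg_vertG. Qed.

Lemma det_weightk : \det (kmx weightk) = nG - nZ.
Proof.
rewrite (det_graded (h := fun i => nat_of_bool (cg_vert i == pivot))); last first.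
  move=> i j ij; rewrite mxE /weightk; have [ip|ip] := eqVneq (cg_vert i) pivot.
    move=> _; rewrite /= ltnS leqn0 eqb0; apply: contra ij => /eqP jp.
    by rewrite -eq_cg_vert ip jp.
  by rewrite /ind eq_cg_vert (eq_sym j i) (negbTE ij) eqxx.
rewrite (eq_bigr (fun i => (fun x => weightk x x) (cg_vert i))); last by move=> i _; rewrite mxE.
rewrite -(big_enum_val (fun x => weightk x x)) /= (bigD1 pivot) ?pivot_subG //=.
rewrite big1 ?mulr1; last by move=> x /andP[_ xp]; rewrite /weightk (negbTE xp) /ind eqxx.
by rewrite /weightk eqxx /pivot_weight rep_pivot eqxx /= (negbTE pivot_neq1).
Qed.

Definition grade_unik (k : gT) : nat :=
  if rep k != k then 2 else if (k == 1%g) || (k == pivot) then 0 else 1.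

Lemma det_unik : \det (kmx unik) = 1.
Proof.
rewrite (det_graded (h := fun i => grade_unik (cg_vert i))); last first.
  move=> i j ij; rewrite -eq_cg_vert in ij; rewrite mxE /unik /grade_unik.
  set x := cg_vert i in ij *; set y := cg_vert j in ij *.
  have [rx|_] := boolP (rep x != x).
    rewrite /ind (eq_sym y x) (negbTE ij) sub0r.
    have [yr|_] := eqVneq y (rep x); last by rewrite oppr0 eqxx.
    by move=> _; rewrite yr rep_idem ?cg_vertG // eqxx /=; case: ifP.
  have [x1|x1] /= := eqVneq x 1%g; first by rewrite /ind -x1 (eq_sym y x) (negbTE ij).
  have [xp|xp] /= := eqVneq x pivot; first by rewrite /ind -xp (eq_sym y x) (negbTE ij).
  rewrite /ind (eq_sym y x) (negbTE ij) sub0r.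
  have [yp|_] := eqVneq y pivot; last by rewrite oppr0 eqxx.
  by move=> _; rewrite yp rep_pivot eqxx /= orbT.
apply: big1 => i _; rewrite mxE /unik /ind eqxx; set x := cg_vert i.
case: ifP => [rx|_]; first by rewrite (_ : (x == rep x) = false) ?subr0 // eq_sym; apply/negbTE.
case: ifP => [/eqP ->|_]; first by rewrite eqxx.
case: ifP => [/eqP ->|xp]; first by rewrite eqxx.
by rewrite xp subr0.
Qed.

Lemma det_eigk_neq0 : \det (kmx eigk) != 0.
Proof.
rewrite eigk_factor det_mulmx det_weightk det_unik mulr1 subr_eq0 /nG /nZ eqr_nat.
by rewrite eq_sym neq_ltn center_lt.
Qed.

Definition grade_trik (k : gT) : nat := if (rep k != k) || (k == pivot) then 0 else 1.

Lemma char_poly_laplacian :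
  char_poly (cg_laplacian G) = \prod_(x in G) ('X - (trik x x)%:P).
Proof.
rewrite (char_poly_similar det_eigk_neq0 similarity).
rewrite (char_poly_graded (h := fun i => grade_trik (cg_vert i))).
  rewrite (eq_bigr (fun i => (fun x => 'X - (trik x x)%:P) (cg_vert i))).
    exact: prod_cg_vert.
  by move=> i _; rewrite mxE.
move=> i j ij; rewrite -eq_cg_vert in ij; rewrite mxE /trik /grade_trik.
set x := cg_vert i in ij *; set y := cg_vert j in ij *.
have [rx|/negbNE/eqP rx] := boolP (rep x != x).
  by rewrite /ind (eq_sym y x) (negbTE ij) mulr0 eqxx.
have [x1|x1] /= := eqVneq x 1%g.
  rewrite /ind -x1 (eq_sym y x) (negbTE ij) mulr0 sub0r.
  have [yp|_] := eqVneq y pivot; last by rewrite oppr0 eqxx.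
  by move=> _; rewrite yp rep_pivot eqxx /= x1 (negbTE one_neq_pivot).
have [//|xp] /= := eqVneq x pivot.
have xR := reps_of (cg_vertG i) rx x1.
rewrite /ind (eq_sym y x) (negbTE ij) mulr0 sub0r.
have [yK _|_] := boolP (y \in block x :\ x); first by have [_ ->] := block_elem xR yK.
have [yK _|_] := boolP (y \in block pivot :\ pivot).
  by have [_ ->] := block_elem pivot_in_reps yK.
by rewrite oppr0 add0r eqxx.
Qed.

Lemma trik_center x : x \in 'Z(G) -> trik x x = nG.
Proof.
move=> xZ; rewrite /trik rep_center //; have [->|x1] /= := eqVneq x 1%g.
  by rewrite /ind (negbTE one_neq_pivot) mulr1 subr0.
by rewrite /ind eqxx mulr1 /csize cent1_center.
Qed.

Lemma trik_block m x : m \in reps -> x \in block m :\ m -> trik x x = (csize m)%:R.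
Proof.
move=> mR xK; have [rx nx] := block_elem mR xK.
by rewrite /trik nx /ind eqxx mulr1 -rx csize_rep //; case/setD1P: xK => _ /block_subG.
Qed.

Lemma trik_rep m : m \in reps -> trik m m = if m == pivot then 0 else nZ.
Proof.
move=> mR; have /setIdP[mnZ /eqP rm] := mR.
have m1 : m != 1%g by apply: contraTneq mR => ->; rewrite one_notin_reps.
rewrite /trik rm eqxx /= (negbTE m1); have [//|mp] := eqVneq m pivot.
rewrite /ind in_setD1 eqxx /= mulr1.
have [mK|_] := boolP (m \in block pivot :\ pivot); last by rewrite subr0 addr0.
by have [h _] := block_elem pivot_in_reps mK; rewrite -h rm eqxx in mp.
Qed.

Lemma prod_trik_center :
  \prod_(x in G | x \in 'Z(G)) ('X - (trik x x)%:P) = ('X - (#|G|%:Z)%:P) ^+ #|'Z(G)|.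
Proof.
rewrite -prodr_const; apply: eq_big => x.
  by apply/andP/idP => [[]//|xZ]; rewrite (subsetP (center_sub G)).
by case/andP => _ xZ; rewrite trik_center // /nG natz.
Qed.

Lemma prod_trik_block m : m \in reps ->
  \prod_(x in block m) ('X - (trik x x)%:P) =
  ('X - (trik m m)%:P) * ('X - ((csize m)%:Z)%:P) ^+ #|block m|.-1.
Proof.
move=> mR; have mK : m \in block m by apply: block_self; case/setIdP: mR.
rewrite (bigD1 m) //=; congr (_ * _).
rewrite (cardsD1 m (block m)) mK -prodr_const; apply: eq_big => x.
  by rewrite in_setD1 andbC.
by move=> /andP[xK xm]; rewrite (trik_block mR) ?in_setD1 ?xm // natz.
Qed.

Lemma prod_trik_reps :
  \prod_(m in reps) ('X - (trik m m)%:P) = 'X * ('X - (#|'Z(G)|%:Z)%:P) ^+ #|reps|.-1.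
Proof.
rewrite (bigD1 pivot pivot_in_reps) /= trik_rep ?pivot_in_reps // eqxx subr0.
rewrite (cardsD1 pivot reps) pivot_in_reps -prodr_const; congr (_ * _).
apply: eq_big => [m|m /andP[mR mp]]; first by rewrite in_setD1 andbC.
by rewrite trik_rep // (negbTE mp) /nZ natz.
Qed.

Lemma prod_trik : \prod_(x in G) ('X - (trik x x)%:P) =
  'X * ('X - (#|'Z(G)|%:Z)%:P) ^+ #|reps|.-1
  * (\prod_(m in reps) ('X - ((csize m)%:Z)%:P) ^+ #|block m|.-1)
  * ('X - (#|G|%:Z)%:P) ^+ #|'Z(G)|.
Proof.
rewrite (bigID (mem 'Z(G))) /= prod_trik_center mulrC; congr (_ * _).
rewrite (eq_bigl (fun x => x \in G :\: 'Z(G))) => [|x]; last by rewrite in_setD andbC.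
rewrite (partition_big rep (fun m => m \in reps)) => [|x]; last by move/rep_in_reps.
rewrite (eq_bigr (fun m => \prod_(x in block m) ('X - (trik x x)%:P))) => [|m mR].
  by rewrite (eq_bigr _ prod_trik_block) big_split /= prod_trik_reps.
apply: eq_bigl => x; rewrite -(rep_fibre mR) in_set in_setD.
have [xZ|//] := boolP (x \in 'Z(G)); rewrite rep_center //=.
by apply/esym/negP => /andP[_ /eqP m1]; rewrite -m1 one_notin_reps in mR.
Qed.

Lemma comp_lambda_block m : m \in reps -> comp_lambda G (block m) = csize m.
Proof.
case/setIdP => /setDP[_ mZ] /eqP rm.
by rewrite /comp_lambda (_ : odflt 1%g _ = m) // -{2}rm /rep (negbTE mZ).
Qed.

Lemma prod_components :
  \prod_(F in nc_components G) ('X - ((comp_lambda G F)%:Z)%:P) ^+ #|F|.-1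
  = \prod_(m in reps) ('X - ((csize m)%:Z)%:P) ^+ #|block m|.-1.
Proof.
rewrite components_blocks big_imset; last exact: block_inj.
by apply: eq_bigr => m mR; rewrite comp_lambda_block.
Qed.

Lemma comp_lambda_bounds F : F \in nc_components G ->
  (0 < comp_lambda G F)%N && (comp_lambda G F < #|G|)%N.
Proof.
rewrite components_blocks => /imsetP[m mR ->]; rewrite comp_lambda_block //.
by rewrite cardG_gt0 cent1_proper //; case/setIdP: mR.
Qed.

Lemma char_poly_laplacian_factored :
  char_poly (cg_laplacian G) =
    'X * ('X - (#|'Z(G)|%:Z)%:P) ^+ #|nc_components G|.-1
    * (\prod_(F in nc_components G) ('X - ((comp_lambda G F)%:Z)%:P) ^+ #|F|.-1)
    * ('X - (#|G|%:Z)%:P) ^+ #|'Z(G)|.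
Proof. by rewrite char_poly_laplacian prod_trik prod_components card_components. Qed.

End CommutingGraphUnderCon.

Local Open Scope ring_scope.

Theorem theorem2p9 (gT : finGroupType) (G : {group gT}) :
  ~~ abelian G -> Con G ->
  let L := cg_laplacian G in
  let Z := 'Z(G)%g in
  let r := #|nc_components G| in
  char_poly L =
    'X * ('X - (#|Z|%:Z)%:P) ^+ r.-1
    * (\prod_(F in nc_components G) ('X - ((comp_lambda G F)%:Z)%:P) ^+ (#|F|.-1))
    * ('X - (#|G|%:Z)%:P) ^+ #|Z|
  /\ mup (0 : algC) (map_poly intr (char_poly L)) = 1%N
  /\ (forall x : algC, root (map_poly intr (char_poly L)) x ->
        x \is Num.real /\ x <= (#|G|)%:R)
  /\ mup ((#|G|)%:R : algC) (map_poly intr (char_poly L)) = #|Z|.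
Proof.
move=> nabG conG L Z r.
have charL := char_poly_laplacian_factored nabG conG.
have charL_algC : map_poly intr (char_poly L) =
    'X * ('X - (#|Z|%:R)%:P) ^+ r.-1
    * (\prod_(F in nc_components G) ('X - ((comp_lambda G F)%:R)%:P) ^+ #|F|.-1)
    * ('X - (#|G|%:R)%:P) ^+ #|Z| :> {poly algC}.
  rewrite charL !rmorphM !rmorphXn rmorph_prod /= map_polyX !map_polyXsubC /= !pmulrn.
  congr (_ * _ * _ * _); apply: eq_bigr => F _.
  by rewrite rmorphXn /= map_polyXsubC /= pmulrn.
have [mup0 roots mupG] := factored_spectrum (fun F : {set gT} => #|F|.-1) r.-1 #|Z|
  (cardG_gt0 'Z(G)) (center_lt nabG) (comp_lambda_bounds conG).
by rewrite charL_algC; split; [exact: charL | split; [|split]].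
Qed.
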